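(* Let $g:\mathbb{R}^d\to\mathbb{R}$ be $p$ times differentiable ($p\ge1$) with $\nabla^pg$ being $L_p$-Lipschitz, and let $L\ge0$. Define $\mathcal T(x)$ to be a minimizer (assumed to exist) of $y\mapsto g_p(y;x)+\frac{L_p+L}{p!}\|y-x\|^{p+1}$, where $g_p(y;x)$ is the $p$-th order Taylor approximation of $g$ about $x$ evaluated at $y$. Then $\mathcal T$ is a $\big((1+p)^{-1}(1+L/L_p)^{-1},\,0\big)$-approximate $\omega$-proximal step oracle for $g$ with $\omega(s)=\frac{(L_p+L)(p+1)}{p!}s^{p-1}$.
   Context: An $(\alpha,\delta)$-approximate $\omega$-proximal step oracle for $g$ is a procedure that, queried at any $x\in\mathbb{R}^d$, returns some $y$ with $\|\nabla g(y)+\omega(\|y-x\|)(y-x)\|\le\alpha\,\omega(\|y-x\|)\|y-x\|+\delta$. *)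

From Stdlib Require Import Reals.
From mathcomp Require Import ssreflect ssrfun ssrbool eqtype ssrnat seq fintype bigop.
Set Implicit Arguments. Unset Strict Implicit.
Open Scope R_scope.

Definition vec (d : nat) := 'I_d -> R.
Definition vadd {d} (u v : vec d) : vec d := fun i => u i + v i.
Definition vsub {d} (u v : vec d) : vec d := fun i => u i - v i.
Definition vscale {d} (a : R) (u : vec d) : vec d := fun i => a * u i.
Definition dot {d} (u v : vec d) : R := \big[Rplus/0]_(i < d) (u i * v i).
Definition vnorm {d} (u : vec d) : R := sqrt (dot u u).
Definition basis {d} (i : 'I_d) : vec d := fun j => if j == i then 1 else 0.

(** k-linear forms on R^d are represented as functions of a list of k vectors. *)
Definition multilinear {d} (k : nat) (T : seq (vec d) -> R) : Prop :=
  forall (us vs : seq (vec d)) (a b : R) (u v : vec d),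
    (size us + size vs + 1 = k)%N ->
    T (us ++ vadd (vscale a u) (vscale b v) :: vs)
    = a * T (us ++ u :: vs) + b * T (us ++ v :: vs).

Definition unit_list {d} (us : seq (vec d)) : Prop :=
  List.Forall (fun u => vnorm u <= 1) us.

(** [derivs_of g p D]: g is p times (Frechet) differentiable and D k x is the
    k-th derivative D^k g(x), a k-linear form; D (k+1) is the Frechet
    derivative of x |-> D k x in operator norm:
    D^k g(x+h)[us] = D^k g(x)[us] + D^{k+1} g(x)[us, h] + o(|h|) uniformly
    for us in the unit ball. *)
Definition derivs_of {d} (g : vec d -> R) (p : nat)
    (D : nat -> vec d -> seq (vec d) -> R) : Prop :=
  (forall x, D 0%N x [::] = g x) /\
  (forall k x, (k <= p)%N -> multilinear k (D k x)) /\
  (forall k x, (k < p)%N -> forall eps, 0 < eps -> exists delta, 0 < delta /\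
     forall h : vec d, vnorm h < delta ->
     forall us, size us = k -> unit_list us ->
       Rabs (D k (vadd x h) us - D k x us - D k.+1 x (rcons us h))
         <= eps * vnorm h).

Definition top_deriv_lipschitz {d} (D : nat -> vec d -> seq (vec d) -> R)
    (p : nat) (Lp : R) : Prop :=
  forall x y us, size us = p -> unit_list us ->
    Rabs (D p x us - D p y us) <= Lp * vnorm (vsub x y).

Definition grad {d} (D : nat -> vec d -> seq (vec d) -> R) (y : vec d) : vec d :=
  fun i => D 1%N y [:: basis i].

Definition taylor {d} (D : nat -> vec d -> seq (vec d) -> R) (p : nat)
    (x y : vec d) : R :=
  \big[Rplus/0]_(k < p.+1) (D k x (nseq k (vsub y x)) / INR (k`!)).

Definition reg_model {d} (D : nat -> vec d -> seq (vec d) -> R) (p : nat)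
    (Lp L : R) (x y : vec d) : R :=
  taylor D p x y + (Lp + L) / INR (p`!) * vnorm (vsub y x) ^ (p.+1).

Definition approx_prox_oracle {d} (gradg : vec d -> vec d) (omega : R -> R)
    (alpha delta : R) (O : vec d -> vec d) : Prop :=
  forall x : vec d,
    vnorm (vadd (gradg (O x)) (vscale (omega (vnorm (vsub (O x) x))) (vsub (O x) x)))
      <= alpha * omega (vnorm (vsub (O x) x)) * vnorm (vsub (O x) x) + delta.

Definition omega_p (Lp L : R) (p : nat) (s : R) : R :=
  (Lp + L) * INR (p.+1) / INR (p`!) * s ^ (p - 1)%N.

(* Let y = T x minimize the regularized Taylor model
   m_x(z) = g_p(z; x) + c |z - x|^(p+1), c = (Lp + L)/p!, and put h = y - x,
   r = |h|, omega(r) = c (p+1) r^(p-1).  The proof has two halves.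

   1. Taylor remainder estimate (taylor_remainder_diff): for R_x = g - g_p(.; x),
      |R_x(z) - R_x(y)| <= Lp |z - y| M^p / p!  when |y - x|, |z - x| <= M.
      It follows from the one-variable Taylor theorem (taylor1d) applied to the
      difference of the derivatives of g along the rays x + s (z - x) and
      x + s (y - x), whose top-order part is Lipschitz by the hypothesis on D^p g.
   2. First-order condition (first_order_condition): comparing m_x(y) with
      m_x(y + t u) for t > 0 and using 1., a function Psi of t with Psi'(0) equal
      to Dg(y)[u] + omega(r) <h, u> + Lp r^p/p! |u| is minimal at t = 0 on
      [0, +oo), hence this quantity is nonnegative.
   Taking u = -(grad g(y) + omega(r) h) gives |grad g(y) + omega(r) h| <= Lp r^p/p!,
   which is alpha omega(r) r for alpha = 1/((1+p)(1+L/Lp)) (oracle_slack). *)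

From Stdlib Require Import Reals Lra FunctionalExtensionality.
From HB Require Import structures.
From mathcomp Require Import ssreflect ssrfun ssrbool eqtype ssrnat seq fintype bigop.
Open Scope R_scope.
Set Implicit Arguments. Unset Strict Implicit.

HB.instance Definition _ := Monoid.isComLaw.Build R 0 Rplus
  (fun a b c => esym (Rplus_assoc a b c)) Rplus_comm Rplus_0_l.
HB.instance Definition _ := Monoid.isMulLaw.Build R 0 Rmult Rmult_0_l Rmult_0_r.
HB.instance Definition _ := Monoid.isAddLaw.Build R Rmult Rplus
  Rmult_plus_distr_r Rmult_plus_distr_l.

Ltac vext := apply functional_extensionality => ?; rewrite /vadd /vscale /vsub; ring.

Lemma quad_discriminant a b c : 0 <= c ->
  (forall l, 0 <= a + 2 * b * l + c * l * l) -> b * b <= a * c.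
Proof.
move=> Hc Hq; case: (Rle_lt_or_eq_dec _ _ Hc) => [Hc0|Hc0]; last subst c.
- have := Hq (- b / c).
  have -> : a + 2 * b * (- b / c) + c * (- b / c) * (- b / c) = (a * c - b * b) / c
    by field; lra.
  move=> H; have := Rmult_le_pos _ _ H Hc.
  by rewrite /Rdiv Rmult_assoc Rinv_l; lra.
- case: (Req_dec b 0) => [->|Hb]; first lra.
  have := Hq (- (a + 1) / (2 * b)).
  have -> : a + 2 * b * (- (a + 1) / (2 * b)) + 0 * (- (a + 1) / (2 * b)) * (- (a + 1) / (2 * b)) = -1
    by field.
  lra.
Qed.

(* If l A <= B whenever l > 0 and l N <= 1, then A <= B N (also for N = 0):
   the scaling argument turning unit-ball bounds into homogeneous ones. *)
Lemma scaling_bound N A B : 0 <= N ->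
  (forall l, 0 < l -> l * N <= 1 -> l * A <= B) -> A <= B * N.
Proof.
move=> HN Hl; case: (Rle_lt_or_eq_dec _ _ HN) => [HN0|HN0]; last subst N.
- have := Hl (/ N) (Rinv_0_lt_compat _ HN0) (Req_le _ _ (Rinv_l _ (Rgt_not_eq _ _ HN0))).
  move=> H; have := Rmult_le_compat_r _ _ _ HN H.
  by rewrite Rmult_comm -Rmult_assoc Rinv_r; lra.
- rewrite Rmult_0_r; case: (Rle_or_lt A 0) => // HA.
  have HB1 : 0 < Rabs B + 1 by have := Rabs_pos B; lra.
  have := Hl ((Rabs B + 1) / A) (Rdiv_lt_0_compat _ _ HB1 HA).
  rewrite Rmult_0_r /Rdiv Rmult_assoc Rinv_l; last lra.
  have := Rle_abs B; lra.
Qed.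

Lemma le_of_sq_le a b : 0 <= a -> 0 <= b -> a * a <= b * a -> a <= b.
Proof.
move=> Ha Hb Hab; case: (Rle_lt_or_eq_dec _ _ Ha) => [Hpos|<-] //.
by apply: (Rmult_le_reg_r a).
Qed.

Lemma Rabs_le_inv x y : Rabs x <= y -> x <= y /\ - x <= y.
Proof. by rewrite /Rabs; case: Rcase_abs; lra. Qed.

Lemma pred_pow_le n a M : 0 <= a <= M -> INR n * (a * M ^ n.-1) <= INR n * M ^ n.
Proof.
move=> [Ha HaM]; case: n => [|n]; first by rewrite /=; lra.
change (INR n.+1 * (a * M ^ n) <= INR n.+1 * (M * M ^ n)).
apply: Rmult_le_compat_l; first exact: pos_INR.
by apply: Rmult_le_compat_r => //; apply: pow_le; lra.
Qed.

Lemma INR_fact_pos n : 0 < INR (n`!).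
Proof. by apply: lt_0_INR; apply/ltP; apply: fact_gt0. Qed.

Lemma INR_factS n : INR (n.+1`!) = INR n.+1 * INR (n`!).
Proof. by rewrite factS -multE mult_INR. Qed.

Lemma big_sub n (F G : 'I_n -> R) :
  \big[Rplus/0]_(i < n) (F i - G i) = \big[Rplus/0]_(i < n) F i - \big[Rplus/0]_(i < n) G i.
Proof.
elim: n F G => [|n IH] F G; first by rewrite !big_ord0; ring.
by rewrite !big_ord_recr IH /=; ring.
Qed.

Lemma nseqSr T n (a : T) : nseq n.+1 a = rcons (nseq n a) a.
Proof. by elim: n => //= n <-. Qed.

Section Vectors.
Variable d : nat.
Implicit Types u v w : vec d.

Lemma dot_addl u v w : dot (vadd u v) w = dot u w + dot v w.
Proof. rewrite /dot -big_split; apply: eq_bigr => i _; rewrite /vadd /=; ring. Qed.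

Lemma dot_scalel a u w : dot (vscale a u) w = a * dot u w.
Proof. rewrite /dot big_distrr; apply: eq_bigr => i _; rewrite /vscale /=; ring. Qed.

Lemma dot_sym u v : dot u v = dot v u.
Proof. rewrite /dot; apply: eq_bigr => i _; ring. Qed.

Lemma dot_addr u v w : dot w (vadd u v) = dot w u + dot w v.
Proof. by rewrite dot_sym dot_addl !(dot_sym w). Qed.

Lemma dot_scaler a u w : dot w (vscale a u) = a * dot w u.
Proof. by rewrite dot_sym dot_scalel (dot_sym w). Qed.

Lemma dot_ge0 u : 0 <= dot u u.
Proof. rewrite /dot; apply: big_ind => [|x y|i _]; [lra | lra | nra]. Qed.

Lemma vnorm_ge0 u : 0 <= vnorm u.
Proof. exact: sqrt_pos. Qed.

Lemma vnorm_sq u : vnorm u * vnorm u = dot u u.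
Proof. by rewrite /vnorm sqrt_sqrt //; apply: dot_ge0. Qed.

Lemma vnorm_scale a u : vnorm (vscale a u) = Rabs a * vnorm u.
Proof.
rewrite /vnorm dot_scalel dot_scaler -Rmult_assoc sqrt_mult ?sqrt_Rsqr_abs //.
- nra.
- exact: dot_ge0.
Qed.

Lemma dot_line u v t :
  dot (vadd u (vscale t v)) (vadd u (vscale t v)) = dot u u + 2 * t * dot u v + t * t * dot v v.
Proof. rewrite !dot_addl !dot_addr !dot_scalel !dot_scaler (dot_sym v u); ring. Qed.

(* Cauchy-Schwarz, from the nonnegativity of |u + l v|^2 in l. *)
Lemma cauchy_schwarz u v : Rabs (dot u v) <= vnorm u * vnorm v.
Proof.
have Hdisc : dot u v * dot u v <= dot u u * dot v v.
  apply: quad_discriminant => [|l]; first exact: dot_ge0.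
  have := dot_ge0 (vadd u (vscale l v)); rewrite dot_line; lra.
rewrite /vnorm -sqrt_mult; try exact: dot_ge0.
rewrite -sqrt_Rsqr_abs.
by apply: sqrt_le_1_alt; rewrite /Rsqr.
Qed.

Lemma vnorm_triangle u v : vnorm (vadd u v) <= vnorm u + vnorm v.
Proof.
have := cauchy_schwarz u v; have := Rle_abs (dot u v).
have := vnorm_ge0 u; have := vnorm_ge0 v => Hv Hu Habs Hcs.
apply: Rsqr_incr_0_var; last nra.
have -> : vadd u v = vadd u (vscale 1 v) by vext.
rewrite /Rsqr vnorm_sq dot_line -(vnorm_sq u) -(vnorm_sq v); nra.
Qed.

Lemma vnorm_line u v t : vnorm (vadd u (vscale t v)) <= vnorm u + Rabs t * vnorm v.
Proof. by rewrite -vnorm_scale; apply: vnorm_triangle. Qed.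

End Vectors.

Section Multilinear.
Variable d : nat.
Implicit Types (u v : vec d) (us vs : seq (vec d)).

Lemma ml_scale k (T : seq (vec d) -> R) us vs a u :
  multilinear k T -> (size us + size vs + 1 = k)%N ->
  T (us ++ vscale a u :: vs) = a * T (us ++ u :: vs).
Proof.
move=> HT Hs; have -> : vscale a u = vadd (vscale a u) (vscale 0 u) by vext.
rewrite HT //; ring.
Qed.

Lemma ml_sub k (T : seq (vec d) -> R) us vs u v :
  multilinear k T -> (size us + size vs + 1 = k)%N ->
  T (us ++ vsub u v :: vs) = T (us ++ u :: vs) - T (us ++ v :: vs).
Proof.
move=> HT Hs; have -> : vsub u v = vadd (vscale 1 u) (vscale (-1) v) by vext.
rewrite HT //; ring.
Qed.

Lemma ml_diff k (T1 T2 : seq (vec d) -> R) :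
  multilinear k T1 -> multilinear k T2 -> multilinear k (fun us => T1 us - T2 us).
Proof. by move=> H1 H2 us vs a b u v Hs; rewrite H1 // H2 //; ring. Qed.

Lemma ml_rcons k (T : seq (vec d) -> R) h :
  multilinear k.+1 T -> multilinear k (fun us => T (rcons us h)).
Proof.
move=> HT us vs a b u v Hs /=; rewrite !rcons_cat /= HT //.
by rewrite size_rcons -Hs !addn1 addnS.
Qed.

Definition prodn us : R := foldr (fun u acc => vnorm u * acc) 1 us.

Lemma prodn_ge0 us : 0 <= prodn us.
Proof. by elim: us => [|u us IH] /=; [lra | apply: Rmult_le_pos => //; apply: vnorm_ge0]. Qed.

Lemma prodn_cat us vs : prodn (us ++ vs) = prodn us * prodn vs.
Proof. by elim: us => [|u us IH] /=; [ring | rewrite IH; ring]. Qed.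

Lemma prodn_nseq n u : prodn (nseq n u) = vnorm u ^ n.
Proof. by elim: n => [|n IH] //=; rewrite IH. Qed.

Lemma unit_rcons us v : unit_list us -> vnorm v <= 1 -> unit_list (rcons us v).
Proof.
elim: us => [|u us IH] /= Hu Hv; first by constructor.
by inversion Hu; subst; constructor => //; apply: IH.
Qed.

Lemma ml_opnorm k (T : seq (vec d) -> R) C :
  multilinear k T ->
  (forall us, size us = k -> unit_list us -> Rabs (T us) <= C) ->
  forall us, size us = k -> Rabs (T us) <= C * prodn us.
Proof.
move=> HT HC.
suff H : forall vs us, (size us + size vs = k)%N -> unit_list us ->
    Rabs (T (us ++ vs)) <= C * prodn vs.
  by move=> us Hs; apply: (H us [::]) => //; constructor.
elim=> [|v vs IH] us Hs Hu.
  by rewrite cats0 /= Rmult_1_r; apply: HC => //; rewrite -Hs addn0.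
have Hs' : (size us + size vs + 1 = k)%N by rewrite -Hs /= addn1 addnS.
have -> : C * prodn (v :: vs) = C * prodn vs * vnorm v by rewrite /=; ring.
apply: scaling_bound; first exact: vnorm_ge0.
move=> l Hl Hlv.
rewrite -(Rabs_pos_eq l (Rlt_le _ _ Hl)) -Rabs_mult -(ml_scale _ _ HT Hs') -cat_rcons.
apply: IH; first by rewrite size_rcons -Hs /= addSn addnS.
by apply: unit_rcons; rewrite // vnorm_scale Rabs_pos_eq; lra.
Qed.

End Multilinear.

(* Stated with an arbitrary prefix [us] of fixed arguments for the induction. *)
Lemma ml_nseq_diff d p (Q : seq (vec d) -> R) C (k h : vec d) M :
  multilinear p Q -> 0 <= C ->
  (forall w, size w = p -> Rabs (Q w) <= C * prodn w) ->
  vnorm k <= M -> vnorm h <= M ->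
  forall n us, (size us + n = p)%N ->
  Rabs (Q (us ++ nseq n k) - Q (us ++ nseq n h)) <=
    C * prodn us * INR n * vnorm (vsub k h) * M ^ n.-1.
Proof.
move=> HQ HC Hb Hk Hh; elim=> [|n IH] us Hs.
  by rewrite /= Rminus_diag Rabs_R0 /=; lra.
have Hs1 : (size us + size (nseq n k) + 1 = p)%N by rewrite size_nseq -Hs addn1 addnS.
have Hs2 : (size (rcons us h) + n = p)%N by rewrite size_rcons -Hs addSn addnS.
have HM : 0 <= M by have := vnorm_ge0 k; lra.
have HCk : 0 <= C * prodn us * vnorm (vsub k h).
  by apply: Rmult_le_pos; [apply: Rmult_le_pos => //; apply: prodn_ge0 | apply: vnorm_ge0].
have -> : Q (us ++ nseq n.+1 k) - Q (us ++ nseq n.+1 h) =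
    Q (us ++ vsub k h :: nseq n k) + (Q (rcons us h ++ nseq n k) - Q (rcons us h ++ nseq n h)).
  by rewrite !cat_rcons (ml_sub _ _ HQ Hs1) /=; ring.
have Hfirst : Rabs (Q (us ++ vsub k h :: nseq n k)) <= C * prodn us * vnorm (vsub k h) * M ^ n.
  apply: Rle_trans; first by apply: Hb; rewrite size_cat /= size_nseq -Hs addnS.
  rewrite prodn_cat /= prodn_nseq.
  have : vnorm k ^ n <= M ^ n by apply: pow_incr; split => //; apply: vnorm_ge0.
  have : 0 <= vnorm k ^ n by apply: pow_le; apply: vnorm_ge0.
  nra.
have Hrest := IH _ Hs2.
rewrite [prodn (rcons us h)](_ : _ = prodn us * vnorm h) in Hrest; last first.
  by rewrite -cats1 prodn_cat /= Rmult_1_r.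
have Hpow := pred_pow_le n (conj (vnorm_ge0 h) Hh).
apply: Rle_trans; first exact: Rabs_triang.
rewrite S_INR /=.
have -> : C * prodn us * (INR n + 1) * vnorm (vsub k h) * M ^ n =
  C * prodn us * vnorm (vsub k h) * M ^ n + C * prodn us * vnorm (vsub k h) * (INR n * M ^ n) by ring.
apply: Rplus_le_compat => //; apply: Rle_trans Hrest _.
have -> : C * (prodn us * vnorm h) * INR n * vnorm (vsub k h) * M ^ n.-1 =
  C * prodn us * vnorm (vsub k h) * (INR n * (vnorm h * M ^ n.-1)) by ring.
exact: Rmult_le_compat_l.
Qed.

Lemma grad_dot d (D : nat -> vec d -> seq (vec d) -> R) y w :
  multilinear 1 (D 1%N y) -> dot (grad D y) w = D 1%N y [:: w].
Proof.
move=> Hlin.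
have Hsum (s : seq 'I_d) : D 1%N y [:: fun j => \big[Rplus/0]_(i <- s) (w i * basis i j)]
    = \big[Rplus/0]_(i <- s) (w i * D 1%N y [:: basis i]).
  elim: s => [|i s IH].
    have -> : (fun j : 'I_d => \big[Rplus/0]_(i <- [::]) (w i * basis i j))
        = vadd (vscale 0 (fun _ => 0)) (vscale 0 (fun _ => 0)).
      by apply: functional_extensionality => j; rewrite big_nil /vadd /vscale; ring.
    by rewrite big_nil (Hlin [::] [::]) //=; ring.
  have -> : (fun j : 'I_d => \big[Rplus/0]_(i0 <- i :: s) (w i0 * basis i0 j)) =
      vadd (vscale (w i) (basis i)) (vscale 1 (fun j => \big[Rplus/0]_(i0 <- s) (w i0 * basis i0 j))).
    by apply: functional_extensionality => j; rewrite big_cons /vadd /vscale; ring.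
  by rewrite (Hlin [::] [::]) //= IH big_cons; ring.
have Ew : w = fun j => \big[Rplus/0]_(i <- index_enum 'I_d) (w i * basis i j).
  apply: functional_extensionality => j.
  rewrite (bigD1 j) //= big1 /basis ?eqxx; first by rewrite /=; ring.
  by move=> i /negbTE Hij; rewrite eq_sym Hij; ring.
by rewrite {2}Ew Hsum /dot /grad; apply: eq_bigr => i _; ring.
Qed.

Section Derivatives.
Variables (d p : nat) (g : vec d -> R) (D : nat -> vec d -> seq (vec d) -> R).
Hypothesis HD : derivs_of g p D.

Lemma deriv_multilinear k z : (k <= p)%N -> multilinear k (D k z).
Proof. by case: HD => _ [H _] Hk; apply: H. Qed.

Lemma deriv_remainder k : (k < p)%N -> forall z eps, 0 < eps -> exists delta, 0 < delta /\
  forall h, vnorm h < delta -> forall us, size us = k ->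
  Rabs (D k (vadd z h) us - D k z us - D k.+1 z (rcons us h)) <= eps * vnorm h * prodn us.
Proof.
move=> Hk z eps He; case: HD => _ [_ Hfrechet].
have [delta [Hd Hb]] := Hfrechet k z Hk eps He.
exists delta; split => // h Hh.
apply: (ml_opnorm (T := fun w => D k (vadd z h) w - D k z w - D k.+1 z (rcons w h))).
- apply: ml_diff; first apply: ml_diff; try apply: deriv_multilinear; try exact: ltnW.
  by apply: ml_rcons; apply: deriv_multilinear.
- by move=> us Hs Hu; apply: Hb.
Qed.

Lemma line_deriv k : (k < p)%N -> forall z v us s0, size us = k ->
  derivable_pt_lim (fun s => D k (vadd z (vscale s v)) us) s0
    (D k.+1 (vadd z (vscale s0 v)) (rcons us v)).
Proof.
move=> Hk z v us s0 Hs eps He.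
set z0 := vadd z (vscale s0 v); set P := prodn us; set N := vnorm v.
have HP : 0 <= P by apply: prodn_ge0.
have HN : 0 <= N by apply: vnorm_ge0.
have HNP : 0 < N * P + 1 by nra.
have [delta [Hd Hb]] := deriv_remainder Hk z0 (Rdiv_lt_0_compat _ _ He HNP).
have Hdelta : 0 < delta / (N + 1) by apply: Rdiv_lt_0_compat; lra.
exists (mkposreal _ Hdelta) => dl Hdl /= Hdlt.
have Hadl : 0 < Rabs dl by apply: Rabs_pos_lt.
have Hstep : vnorm (vscale dl v) < delta.
  rewrite vnorm_scale -/N.
  have : Rabs dl * (N + 1) < delta / (N + 1) * (N + 1) by apply: Rmult_lt_compat_r; lra.
  rewrite /Rdiv Rmult_assoc Rinv_l; lra.
have Hsz : (size us + size (@nil (vec d)) + 1 = k.+1)%N by rewrite Hs addn0 addn1.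
have := Hb _ Hstep us Hs.
rewrite -cats1 (ml_scale _ _ (deriv_multilinear z0 Hk) Hsz) cats1 vnorm_scale -/P -/N.
have -> : vadd z (vscale (s0 + dl) v) = vadd z0 (vscale dl v) by rewrite /z0; vext.
set A := _ - _ - _ => HA.
have -> : (D k (vadd z0 (vscale dl v)) us - D k z0 us) / dl - D k.+1 z0 (rcons us v) = A / dl
  by rewrite /A; field.
rewrite /Rdiv Rabs_mult Rabs_inv.
apply: (Rmult_lt_reg_r (Rabs dl)) => //; rewrite Rmult_assoc Rinv_l; last lra.
rewrite Rmult_1_r; apply: Rle_lt_trans HA _.
have -> : eps / (N * P + 1) * (Rabs dl * N) * P = eps * Rabs dl * (N * P / (N * P + 1))
  by field; lra.
have : N * P / (N * P + 1) < 1 by apply: (Rmult_lt_reg_r (N * P + 1)); [lra | field_simplify; lra].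
have : 0 < eps * Rabs dl by nra.
nra.
Qed.

End Derivatives.

Lemma derivable_pt_lim_value (f : R -> R) x l l' :
  derivable_pt_lim f x l -> l = l' -> derivable_pt_lim f x l'.
Proof. by move=> H <-. Qed.

Lemma sum_deriv n (F G : nat -> R -> R) s :
  (forall j, (j < n)%N -> derivable_pt_lim (F j) s (G j s)) ->
  derivable_pt_lim (fun t => \big[Rplus/0]_(j < n) F j t) s (\big[Rplus/0]_(j < n) G j s).
Proof.
elim: n => [|n IH] H.
  rewrite big_ord0; apply: (derivable_pt_lim_ext (fun _ => 0)); last exact: derivable_pt_lim_const.
  by move=> t; rewrite big_ord0.
rewrite big_ord_recr /=.
apply: (derivable_pt_lim_ext (fun t => \big[Rplus/0]_(j < n) F j t + F n t)).
  by move=> t; rewrite big_ord_recr.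
apply: derivable_pt_lim_plus; last exact: H.
by apply: IH => j Hj; apply: H; apply: ltnW.
Qed.

Lemma monomial_deriv c j s :
  derivable_pt_lim (fun t => c * t ^ j.+1 / INR (j.+1`!)) s (c * s ^ j / INR (j`!)).
Proof.
have Hf := INR_fact_pos j; have Hf1 := INR_fact_pos j.+1.
apply: (derivable_pt_lim_ext (mult_real_fct (c / INR (j.+1`!)) (pow^~ j.+1))).
  by move=> t; rewrite /mult_real_fct; field; lra.
have -> : c * s ^ j / INR (j`!) = c / INR (j.+1`!) * (INR j.+1 * s ^ j.+1.-1).
  by rewrite INR_factS S_INR /=; field; have := pos_INR j; lra.
exact: derivable_pt_lim_scal (derivable_pt_lim_pow _ _).
Qed.

(* Taylor polynomial at 0, of order n, of a function whose successive
   derivatives are f 0, f 1, ... *)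
Definition taylor_poly (f : nat -> R -> R) n s : R :=
  \big[Rplus/0]_(j < n.+1) (f j 0 * s ^ j / INR (j`!)).

Lemma taylor_poly_deriv f n s :
  derivable_pt_lim (taylor_poly f n.+1) s (taylor_poly (fun j => f j.+1) n s).
Proof.
apply: (derivable_pt_lim_ext
  (fun t => f 0%N 0 + \big[Rplus/0]_(j < n.+1) (f j.+1 0 * t ^ j.+1 / INR (j.+1`!)))).
  by move=> t; rewrite /taylor_poly [RHS]big_ord_recl /= /Rdiv Rinv_1; congr (_ + _); first ring.
have -> : taylor_poly (fun j => f j.+1) n s =
    0 + \big[Rplus/0]_(j < n.+1) (f j.+1 0 * s ^ j / INR (j`!)) by rewrite Rplus_0_l.
apply: derivable_pt_lim_plus; first exact: derivable_pt_lim_const.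
apply: (sum_deriv (F := fun j t => f j.+1 0 * t ^ j.+1 / INR (j.+1`!))
                  (G := fun j t => f j.+1 0 * t ^ j / INR (j`!))) => j _.
exact: monomial_deriv.
Qed.

Lemma taylor_poly0 f n : taylor_poly f n 0 = f 0%N 0.
Proof.
rewrite /taylor_poly big_ord_recl big1 /=; first by field.
by move=> i _; rewrite /Rdiv !(Rmult_0_l, Rmult_0_r).
Qed.

Lemma nonpos_of_deriv_nonpos (H H' : R -> R) :
  (forall s, 0 <= s <= 1 -> derivable_pt_lim H s (H' s)) ->
  (forall s, 0 <= s <= 1 -> H' s <= 0) -> H 0 = 0 ->
  forall s, 0 <= s <= 1 -> H s <= 0.
Proof.
move=> Hd Hn H0 s [Hs0 Hs1].
case: (Rle_lt_or_eq_dec 0 s Hs0) => [Hpos|<-]; last lra.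
have [c [Hc1 [Hc2 Hc3]]] :=
  MVT_cor2 H H' 0 s Hpos (fun c Hc => Hd c (conj (proj1 Hc) (Rle_trans _ _ _ (proj2 Hc) Hs1))).
have := Hn c (conj (Rlt_le _ _ Hc2) (Rle_trans _ _ _ (Rlt_le _ _ Hc3) Hs1)).
nra.
Qed.

Lemma taylor1d n : forall (f : nat -> R -> R) K,
  (forall j s, (j < n)%N -> derivable_pt_lim (f j) s (f j.+1 s)) ->
  (forall s, 0 <= s <= 1 -> Rabs (f n s - f n 0) <= K * s) ->
  forall s, 0 <= s <= 1 ->
  Rabs (f 0%N s - taylor_poly f n s) <= K * s ^ n.+1 / INR (n.+1`!).
Proof.
elim: n => [|n IH] f K Hd Hb s Hs.
  by rewrite /taylor_poly big_ord1 /= /Rdiv Rinv_1 !Rmult_1_r; apply: Hb.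
have IH' := IH (fun j => f j.+1) K (fun j s Hj => Hd j.+1 s Hj) Hb.
set E := fun t => f 0%N t - taylor_poly f n.+1 t.
set E' := fun t => f 1%N t - taylor_poly (fun j => f j.+1) n t.
set B := fun t => K * t ^ n.+2 / INR (n.+2`!).
set B' := fun t => K * t ^ n.+1 / INR (n.+1`!).
have HE t : derivable_pt_lim E t (E' t).
  by apply: derivable_pt_lim_minus; [apply: Hd | apply: taylor_poly_deriv].
have HB t : derivable_pt_lim B t (B' t) by apply: monomial_deriv.
have HE0 : E 0 = 0 by rewrite /E taylor_poly0; ring.
have HB0 : B 0 = 0 by rewrite /B /=; field; have := INR_fact_pos n.+2; lra.
have Hup : E s - B s <= 0.
  apply: (nonpos_of_deriv_nonpos (H := fun t => E t - B t) (H' := fun t => E' t - B' t)) => //.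
  - by move=> t _; apply: derivable_pt_lim_minus.
  - by move=> t Ht; have [] := Rabs_le_inv (IH' t Ht); rewrite /E' /B'; lra.
  - by rewrite HE0 HB0; ring.
have Hlow : - E s - B s <= 0.
  apply: (nonpos_of_deriv_nonpos (H := fun t => - E t - B t) (H' := fun t => - E' t - B' t)) => //.
  - by move=> t _; apply: derivable_pt_lim_minus => //; apply: derivable_pt_lim_opp.
  - by move=> t Ht; have [] := Rabs_le_inv (IH' t Ht); rewrite /E' /B'; lra.
  - by rewrite HE0 HB0; ring.
by apply: Rabs_le; rewrite -/(E s) -/(B s); lra.
Qed.

Lemma deriv_nonneg_at_right_min (f : R -> R) l :
  derivable_pt_lim f 0 l -> (forall t, 0 < t -> f 0 <= f t) -> 0 <= l.
Proof.
move=> Hd Hmin; case: (Rle_or_lt 0 l) => // Hl.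
have [delta Hdelta] := Hd (- l) ltac:(lra).
have Hpos := cond_pos delta.
have Ht : Rabs (delta / 2) < delta by rewrite Rabs_pos_eq; lra.
have := Hdelta (delta / 2) ltac:(lra) Ht.
rewrite Rplus_0_l => Hq.
have : 0 <= (f (delta / 2) - f 0) / (delta / 2).
  by apply: Rmult_le_pos; [have := Hmin (delta / 2); lra | left; apply: Rinv_0_lt_compat; lra].
have := Rle_abs ((f (delta / 2) - f 0) / (delta / 2) - l); lra.
Qed.

Lemma deriv_zero_of_quadratic_bound (f : R -> R) C : 0 <= C ->
  (forall t, Rabs t <= 1 -> Rabs (f t - f 0) <= C * (t * t)) -> derivable_pt_lim f 0 0.
Proof.
move=> HC Hf eps He.
have Hdel : 0 < Rmin 1 (eps / (C + 1)) by apply: Rmin_pos; [lra | apply: Rdiv_lt_0_compat; lra].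
exists (mkposreal _ Hdel) => t Ht0 Htd; rewrite /= in Htd.
have Ha0 : 0 < Rabs t by apply: Rabs_pos_lt.
have Ha1 : Rabs t <= 1 by have := Rmin_l 1 (eps / (C + 1)); lra.
have HaC : Rabs t * (C + 1) < eps.
  have : Rabs t < eps / (C + 1) by have := Rmin_r 1 (eps / (C + 1)); lra.
  by move=> /(Rmult_lt_compat_r (C + 1)) H; rewrite /Rdiv Rmult_assoc Rinv_l in H; lra.
rewrite Rplus_0_l Rminus_0_r /Rdiv Rabs_mult Rabs_inv.
apply: (Rmult_lt_reg_r (Rabs t)) => //; rewrite Rmult_assoc Rinv_l; last lra.
have Htt : t * t = Rabs t * Rabs t by rewrite -Rabs_mult Rabs_pos_eq //; nra.
have := Hf t Ha1; rewrite Htt Rmult_1_r => H.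
have : C * Rabs t < eps by nra.
nra.
Qed.

Lemma slack_deriv r a n :
  derivable_pt_lim (fun t => t * (r + t * a) ^ n) 0 (r ^ n).
Proof.
have Hlin : derivable_pt_lim (fun t => r + t * a) 0 (0 + 1 * a).
  apply: derivable_pt_lim_plus; first exact: derivable_pt_lim_const.
  apply: (derivable_pt_lim_ext (fun t => a * t)); first by move=> t; ring.
  by rewrite Rmult_comm; apply: derivable_pt_lim_scal; apply: derivable_pt_lim_id.
have Hpow := derivable_pt_lim_comp _ _ _ _ _ Hlin (derivable_pt_lim_pow (r + 0 * a) n).
apply: (derivable_pt_lim_value (derivable_pt_lim_mult _ _ _ _ _ (derivable_pt_lim_id 0) Hpow)).
by rewrite /Ranalysis1.comp /Ranalysis1.id !Rmult_0_l !Rplus_0_r Rmult_1_l.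
Qed.

Lemma norm_pow_line_deriv_pos d n (h u : vec d) : (1 <= n)%N -> 0 < vnorm h ->
  derivable_pt_lim (fun t => vnorm (vadd h (vscale t u)) ^ n.+1) 0
    (INR n.+1 * vnorm h ^ (n - 1) * dot h u).
Proof.
move=> Hn Hr.
set q := fun t => dot h h + 2 * t * dot h u + t * t * dot u u.
have Hq : derivable_pt_lim q 0 (2 * dot h u).
  apply: (derivable_pt_lim_ext (fun t => dot h h + (2 * dot h u) * t + dot u u * (t * t))).
    by move=> t; rewrite /q; ring.
  apply: (derivable_pt_lim_value (l := 0 + 2 * dot h u * 1 + dot u u * (1 * 0 + 0 * 1)));
    last by ring.
  apply: derivable_pt_lim_plus; first apply: derivable_pt_lim_plus.
  + exact: derivable_pt_lim_const.
  + by apply: derivable_pt_lim_scal; apply: derivable_pt_lim_id.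
  + by apply: derivable_pt_lim_scal; apply: derivable_pt_lim_mult; apply: derivable_pt_lim_id.
have Hq0 : 0 < q 0 by rewrite /q -vnorm_sq; nra.
have Hsqrt := derivable_pt_lim_comp _ _ _ _ _ Hq (derivable_pt_lim_sqrt _ Hq0).
have := derivable_pt_lim_comp _ _ _ _ _ Hsqrt (derivable_pt_lim_pow _ n.+1).
have Hval : INR n.+1 * Ranalysis1.comp sqrt q 0 ^ n.+1.-1 * (/ (2 * sqrt (q 0)) * (2 * dot h u))
    = INR n.+1 * vnorm h ^ (n - 1) * dot h u.
  rewrite /Ranalysis1.comp; have -> : sqrt (q 0) = vnorm h by rewrite /q /vnorm; f_equal; ring.
  by case: n Hn {Hsqrt} => [|n] // _; rewrite subn1 /=; field; lra.
move=> H; apply: (derivable_pt_lim_ext _ _ _ _ _ (derivable_pt_lim_value H Hval)) => t.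
by rewrite /Ranalysis1.comp /q /vnorm dot_line.
Qed.

(* d/dt |h + t u|^(n+1) at t = 0 equals (n+1) |h|^(n-1) <h, u> for n >= 1;
   when h = 0 both sides vanish because |t u|^(n+1) <= t^2 |u|^(n+1). *)
Lemma norm_pow_line_deriv d n (h u : vec d) : (1 <= n)%N ->
  derivable_pt_lim (fun t => vnorm (vadd h (vscale t u)) ^ n.+1) 0
    (INR n.+1 * vnorm h ^ (n - 1) * dot h u).
Proof.
move=> Hn; case: (Rle_lt_or_eq_dec _ _ (vnorm_ge0 h)) => Hr.
  exact: norm_pow_line_deriv_pos.
have Hhu : dot h u = 0.
  by have := cauchy_schwarz h u; rewrite -Hr Rmult_0_l => /Rabs_le_inv; lra.
rewrite Hhu Rmult_0_r.
apply: (deriv_zero_of_quadratic_bound (C := vnorm u ^ n.+1)) => [|t Ht].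
  by apply: pow_le; apply: vnorm_ge0.
have -> : vadd h (vscale 0 u) = h by vext.
rewrite -Hr pow_i; last by apply/ltP.
rewrite Rminus_0_r Rabs_pos_eq; last by apply: pow_le; apply: vnorm_ge0.
have Hline : vnorm (vadd h (vscale t u)) <= Rabs t * vnorm u.
  by have := vnorm_line h u t; rewrite -Hr Rplus_0_l.
apply: Rle_trans (pow_incr _ _ n.+1 (conj (vnorm_ge0 _) Hline)) _.
have Htt : Rabs t ^ n.+1 <= t * t.
  have : Rabs t ^ n.-1 <= 1 by rewrite -(pow1 n.-1); apply: pow_incr; split => //; apply: Rabs_pos.
  have : 0 <= Rabs t ^ n.-1 by apply: pow_le; apply: Rabs_pos.
  rewrite (_ : t * t = Rabs t * Rabs t); last by rewrite -Rabs_mult Rabs_pos_eq //; nra.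
  case: n Hn => [|n] // _ /=; have := Rabs_pos t; nra.
rewrite Rpow_mult_distr [X in _ <= X]Rmult_comm.
by apply: Rmult_le_compat_r => //; apply: pow_le; apply: vnorm_ge0.
Qed.

Section TaylorRemainder.
Variables (d p : nat) (g : vec d -> R) (D : nat -> vec d -> seq (vec d) -> R) (Lp : R).
Hypothesis HD : derivs_of g p D.
Hypothesis HL : top_deriv_lipschitz D p Lp.
Hypothesis HLp : 0 <= Lp.

Lemma top_deriv_opnorm a b us :
  size us = p -> Rabs (D p a us - D p b us) <= Lp * vnorm (vsub a b) * prodn us.
Proof.
move=> Hs; apply: (ml_opnorm (k := p) (T := fun w => D p a w - D p b w)) => //.
- by apply: ml_diff; apply: (deriv_multilinear HD _ (leqnn p)).
- by move=> w Hw Hu; apply: HL.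
Qed.

(* j-th derivative along the segment x + s k, in direction k, minus the same
   quantity along x + s h. At s = 1 its Taylor expansion compares the Taylor
   remainders at x + k and x + h. *)
Definition ray_gap (x k h : vec d) (j : nat) (s : R) : R :=
  D j (vadd x (vscale s k)) (nseq j k) - D j (vadd x (vscale s h)) (nseq j h).

Lemma ray_gap_deriv x k h j s : (j < p)%N ->
  derivable_pt_lim (ray_gap x k h j) s (ray_gap x k h j.+1 s).
Proof.
move=> Hj; rewrite /ray_gap !nseqSr.
by apply: derivable_pt_lim_minus; apply: (line_deriv HD Hj); apply: size_nseq.
Qed.

(* The top-order gap is Lipschitz in s: both the base points and the
   arguments of D^p g move by at most |k - h|. *)
Lemma ray_gap_top x k h M s : vnorm k <= M -> vnorm h <= M -> 0 <= s <= 1 ->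
  Rabs (ray_gap x k h p s - ray_gap x k h p 0)
    <= Lp * vnorm (vsub k h) * INR p.+1 * M ^ p * s.
Proof.
move=> HkM HhM [Hs0 Hs1].
have Hx0 w : vadd x (vscale 0 w) = x by vext.
rewrite /ray_gap !Hx0.
set a := vadd x (vscale s k); set b := vadd x (vscale s h).
have -> : D p a (nseq p k) - D p b (nseq p h) - (D p x (nseq p k) - D p x (nseq p h)) =
    (D p a (nseq p k) - D p b (nseq p k)) +
    ((D p b (nseq p k) - D p x (nseq p k)) - (D p b (nseq p h) - D p x (nseq p h))) by ring.
apply: Rle_trans; first exact: Rabs_triang.
have Eab : vsub a b = vscale s (vsub k h) by rewrite /a /b; vext.
have Ebx : vsub b x = vscale s h by rewrite /b; vext.
have Hbase := top_deriv_opnorm a b (size_nseq p k).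
rewrite Eab vnorm_scale (Rabs_pos_eq s Hs0) prodn_nseq in Hbase.
have Hargs := ml_nseq_diff (Q := fun w => D p b w - D p x w)
  (ml_diff (deriv_multilinear HD _ (leqnn p)) (deriv_multilinear HD _ (leqnn p)))
  (Rmult_le_pos _ _ HLp (vnorm_ge0 _)) (fun w Hw => top_deriv_opnorm b x Hw) HkM HhM
  (us := [::]) (erefl _).
rewrite /= Ebx vnorm_scale (Rabs_pos_eq s Hs0) Rmult_1_r in Hargs.
have Hkh := vnorm_ge0 (vsub k h).
have HLs : 0 <= Lp * s * vnorm (vsub k h) by apply: Rmult_le_pos => //; apply: Rmult_le_pos.
have Hkp : Lp * s * vnorm (vsub k h) * vnorm k ^ p <= Lp * s * vnorm (vsub k h) * M ^ p.
  by apply: Rmult_le_compat_l => //; apply: pow_incr; split => //; apply: vnorm_ge0.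
have Hhp := Rmult_le_compat_l _ _ _ HLs (pred_pow_le p (conj (vnorm_ge0 h) HhM)).
rewrite S_INR; nra.
Qed.

Lemma taylor_remainder_diff x y z M :
  vnorm (vsub y x) <= M -> vnorm (vsub z x) <= M ->
  Rabs ((D 0%N z [::] - taylor D p x z) - (D 0%N y [::] - taylor D p x y))
    <= Lp * vnorm (vsub z y) * M ^ p / INR (p`!).
Proof.
move=> Hy Hz.
have Hf := INR_fact_pos p.
have Hx1 w : vadd x (vscale 1 w) = vadd x w by vext.
have Hx0 w : vadd x (vscale 0 w) = x by vext.
have Ekh : vsub (vsub z x) (vsub y x) = vsub z y by vext.
have Htop s : 0 <= s <= 1 ->
    Rabs (ray_gap x (vsub z x) (vsub y x) p s - ray_gap x (vsub z x) (vsub y x) p 0)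
    <= Lp * vnorm (vsub z y) * INR p.+1 * M ^ p * s.
  by rewrite -Ekh; apply: ray_gap_top.
have := taylor1d (fun j s Hj => ray_gap_deriv x _ _ s Hj) Htop (conj Rle_0_1 (Rle_refl 1)).
have -> : ray_gap x (vsub z x) (vsub y x) 0 1 = D 0%N z [::] - D 0%N y [::].
  by rewrite /ray_gap !Hx1; congr (D 0%N _ _ - D 0%N _ _); vext.
have -> : taylor_poly (ray_gap x (vsub z x) (vsub y x)) p 1 = taylor D p x z - taylor D p x y.
  rewrite /taylor_poly /taylor -big_sub; apply: eq_bigr => j _.
  have Hj := INR_fact_pos j; rewrite /ray_gap !Hx0 pow1; field; lra.
rewrite pow1 INR_factS Rmult_1_r => H.
have -> : D 0%N z [::] - taylor D p x z - (D 0%N y [::] - taylor D p x y) =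
  D 0%N z [::] - D 0%N y [::] - (taylor D p x z - taylor D p x y) by ring.
apply: Rle_trans H (Req_le _ _ _); field; rewrite S_INR; have := pos_INR p; lra.
Qed.

End TaylorRemainder.

Section ProximalStep.
Variables (d p : nat) (g : vec d -> R) (D : nat -> vec d -> seq (vec d) -> R)
  (Lp L : R) (T : vec d -> vec d).
Hypothesis Hp : (1 <= p)%N.
Hypothesis HD : derivs_of g p D.
Hypothesis HLp : 0 < Lp.
Hypothesis HL : top_deriv_lipschitz D p Lp.
Hypothesis HT : forall x y : vec d, reg_model D p Lp L x (T x) <= reg_model D p Lp L x y.

(* Moving from y to y + t u increases the model by at most Psi(t) - Psi(0),
   where Psi adds to g the regularizer and the Taylor-remainder slack; since
   Psi is minimal at 0 on [0, +oo), Psi'(0) >= 0. *)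
Lemma first_order_condition x u :
  0 <= D 1%N (T x) [:: u] + omega_p Lp L p (vnorm (vsub (T x) x)) * dot (vsub (T x) x) u
       + Lp * vnorm (vsub (T x) x) ^ p / INR (p`!) * vnorm u.
Proof.
set y := T x; set h := vsub y x; set r := vnorm h.
set c := (Lp + L) / INR (p`!); set s := Lp * vnorm u / INR (p`!).
have Hf := INR_fact_pos p.
have Hu0 := vnorm_ge0 u.
set Psi := fun t => D 0%N (vadd y (vscale t u)) [::] + c * vnorm (vadd h (vscale t u)) ^ p.+1
  + s * (t * (r + t * vnorm u) ^ p).
have Hderiv : derivable_pt_lim Psi 0
    (D 1%N y [:: u] + c * (INR p.+1 * r ^ (p - 1) * dot h u) + s * r ^ p).
  apply: derivable_pt_lim_plus; first apply: derivable_pt_lim_plus.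
  - have := line_deriv HD Hp y u 0 (us := [::]) (erefl _).
    by have -> : vadd y (vscale 0 u) = y by vext.
  - by apply: derivable_pt_lim_scal; apply: norm_pow_line_deriv.
  - by apply: derivable_pt_lim_scal; apply: slack_deriv.
have Hmin t : 0 < t -> Psi 0 <= Psi t.
  move=> Ht; set z := vadd y (vscale t u).
  have Hopt := HT x z; rewrite /reg_model -/y in Hopt.
  have Ezx : vsub z x = vadd h (vscale t u) by rewrite /z /h; vext.
  have Ezy : vnorm (vsub z y) = t * vnorm u.
    by rewrite (_ : vsub z y = vscale t u) ?vnorm_scale ?Rabs_pos_eq //; [lra | rewrite /z; vext].
  have Hzx : vnorm (vsub z x) <= r + t * vnorm u.
    by rewrite Ezx; have := vnorm_line h u t; rewrite (Rabs_pos_eq t) -/r; lra.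
  have Htu : 0 <= t * vnorm u by apply: Rmult_le_pos; lra.
  have Hyx : vnorm (vsub y x) <= r + t * vnorm u by rewrite -/h -/r; lra.
  have [_ Hrem] := Rabs_le_inv (taylor_remainder_diff HD HL (Rlt_le _ _ HLp) Hyx Hzx).
  rewrite Ezy Ezx -/h -/r -/c in Hrem Hopt.
  have Hslack : Lp * (t * vnorm u) * (r + t * vnorm u) ^ p / INR (p`!)
      = s * (t * (r + t * vnorm u) ^ p) by rewrite /s; field; lra.
  have -> : Psi 0 = D 0%N y [::] + c * r ^ p.+1 + s * 0.
    rewrite /Psi !Rmult_0_l (_ : vadd y (vscale 0 u) = y); last by vext.
    by rewrite (_ : vadd h (vscale 0 u) = h); last by vext.
  rewrite /Psi -/z; lra.
have Hom : omega_p Lp L p r = c * INR p.+1 * r ^ (p - 1) by rewrite /omega_p /c; field; lra.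
move: (deriv_nonneg_at_right_min Hderiv Hmin); rewrite Hom /s => H.
by apply: Rle_trans H (Req_le _ _ _); field; lra.
Qed.

End ProximalStep.

Lemma oracle_slack Lp L p r : (1 <= p)%N -> 0 < Lp -> 0 <= L ->
  / (1 + INR p) * / (1 + L / Lp) * omega_p Lp L p r * r = Lp * r ^ p / INR (p`!).
Proof.
move=> Hp HLp HL0; rewrite /omega_p.
case: p Hp => [|p] // _; rewrite subn1 !S_INR.
change (r ^ p.+1) with (r * r ^ p); change (p.+1.-1) with p.
have := pos_INR p; have := INR_fact_pos p.+1 => H1 H2.
by field; repeat split; lra.
Qed.

Unset Implicit Arguments.
Set Strict Implicit.

Theorem mainTheorem19 (d p : nat) (g : vec d -> R)
    (D : nat -> vec d -> seq (vec d) -> R) (Lp L : R) (T : vec d -> vec d) :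
  (1 <= p)%N ->
  derivs_of g p D ->
  0 < Lp ->
  top_deriv_lipschitz D p Lp ->
  0 <= L ->
  (forall x y : vec d, reg_model D p Lp L x (T x) <= reg_model D p Lp L x y) ->
  approx_prox_oracle (grad D) (omega_p Lp L p)
    (/ (1 + INR p) * / (1 + L / Lp)) 0 T.
Proof.
move=> Hp HD HLp HL HL0 HT x.
set y := T x; set h := vsub y x; set r := vnorm h; set w := omega_p Lp L p r.
set W := vadd (grad D y) (vscale w h).
rewrite Rplus_0_r oracle_slack //.
have HB : 0 <= Lp * r ^ p / INR (p`!).
  have := INR_fact_pos p; have : 0 <= r ^ p by apply: pow_le; apply: vnorm_ge0.
  by move=> Hrp Hf; apply: Rmult_le_pos; [nra | left; apply: Rinv_0_lt_compat].
have Hlin : multilinear 1 (D 1%N y) by apply: (deriv_multilinear HD).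
have EW : dot W W = D 1%N y [:: W] + w * dot h W.
  by rewrite /W dot_addl dot_scalel grad_dot.
(* The first-order condition in the direction -W reads |W|^2 <= (Lp r^p / p!) |W|. *)
have := first_order_condition Hp HD HLp HL HT x (vscale (-1) W).
rewrite -/y -/h -/r -/w (ml_scale (us := [::]) (vs := [::]) _ _ Hlin) //= dot_scaler vnorm_scale.
rewrite Rabs_Ropp Rabs_R1 Rmult_1_l => Hfoc.
apply: le_of_sq_le => //; first exact: vnorm_ge0.
by rewrite vnorm_sq EW; lra.
Qed.
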